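(* Let $f \in \mathbb{Z}[T, Y]$ be monic in $Y$, of degree $d_T$ in $T$ and degree $d_Y$ in $Y$. Let $t = a/b \in \mathbb{Q}$ be written in lowest terms, and let $y \in \mathbb{Q}$ satisfy $f(t, y) = 0$. Then $y = c / b^{d_T}$ for some $c \in \mathbb{Z}$ with $|c| \leq 2 (d_T + 1) \|f\| H(t)^{d_T}$.
   Context: Monic in $Y$ means the leading coefficient of $f$ as a polynomial in $Y$ over $\mathbb{Z}[T]$ is $1$. The height of $t = a/b$ in lowest terms is $H(t) = \max(|a|,|b|)$. For a nonzero integer polynomial $f$, $\|f\|$ is the maximum of $2$ and the absolute values of its coefficients. *)

From HB Require Import structures.
From mathcomp Require Import all_boot all_order all_algebra.
Set Implicit Arguments. Unset Strict Implicit. Unset Printing Implicit Defensive.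
Import Order.TTheory GRing.Theory Num.Theory.
Local Open Scope ring_scope.

(* A bivariate integer polynomial f in Z[T,Y] is represented as a polynomial
   in Y whose coefficients are polynomials in T: f : {poly {poly int}}. *)

Definition degT (f : {poly {poly int}}) : nat :=
  \max_(i < size f) (size (f`_i)%R).-1.

Definition degY (f : {poly {poly int}}) : nat := (size f).-1.

Definition eval2 (f : {poly {poly int}}) (t y : rat) : rat :=
  (map_poly (fun p : {poly int} => (map_poly (fun z : int => z%:~R) p).[t]) f).[y].

Definition normf (f : {poly {poly int}}) : int :=
  \big[Num.max/2]_(i < size f) \big[Num.max/2]_(j < size (f`_i)%R) `|((f`_i)`_j)%R|.

Definition height (a b : int) : int := Num.max `|a| `|b|.

From HB Require Import structures.
From mathcomp Require Import all_boot all_order all_algebra.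
From mathcomp Require Import ring lra zify.
Import Order.TTheory GRing.Theory Num.Theory.
Local Open Scope ring_scope.

(* Put F(Y) = f(t, Y), a monic polynomial in Q[Y] of degree n, and B = b^dT.
   Each coefficient F_i = f_i(a/b) satisfies B F_i = sum_j f_ij a^j b^(dT-j),
   an integer of absolute value at most M = (dT+1) ||f|| H(t)^dT.  Hence
   z = B y is a root of the monic integer polynomial B^n F(Y/B), so z is an
   integer by the rational root theorem, while Cauchy's bound
   |y| <= 1 + max_i |F_i| <= 1 + M/|B| gives |z| <= |B| + M <= 2M. *)

Lemma horner_monic (R : nzRingType) (p : {poly R}) x : p \is monic ->
  p.[x] = x ^+ (size p).-1 + \sum_(i < (size p).-1) p`_i * x ^+ i.
Proof.
move=> monp; rewrite horner_coef (polySpred (monic_neq0 monp)) big_ord_recr /=.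
by rewrite -lead_coefE (monicP monp) mul1r addrC.
Qed.

Lemma root_monic_norm_le {R : realFieldType} {p : {poly R}} {y K : R} :
  p \is monic -> root p y -> (forall i, (i < (size p).-1)%N -> `|p`_i| <= K) ->
  `|y| <= 1 + K.
Proof.
move=> monp /rootP; rewrite horner_monic //; set n := (size p).-1 => py0 pK.
have K0 : 0 <= K.
  case: n => [|n] in py0 pK *; last exact: le_trans (pK 0%N _).
  by move: py0; rewrite big_ord0 expr0 addr0 => /eqP; rewrite oner_eq0.
have [y_le1 | y_gt1] := lerP `|y| 1; first by apply: le_trans y_le1 _; rewrite lerDl.
set u := `|y| in y_gt1 *.
have un_le : u ^+ n <= K * \sum_(i < n) u ^+ i.
  have -> : u ^+ n = `|\sum_(i < n) p`_i * y ^+ i|.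
    by rewrite -normrX -normrN; congr `|_|; apply/eqP; rewrite eq_sym -addr_eq0 addrC py0.
  rewrite mulr_sumr; apply: le_trans (ler_norm_sum _ _ _) _; apply: ler_sum => i _.
  by rewrite normrM normrX ler_wpM2r ?exprn_ge0 ?pK.
have geom : (u - 1) * \sum_(i < n) u ^+ i = u ^+ n - 1 by rewrite subrX1.
have un_gt0 : 0 < u ^+ n by rewrite exprn_gt0 // (lt_trans ltr01).
suff : (u - 1) * u ^+ n <= K * u ^+ n by rewrite ler_pM2r //; lra.
apply: le_trans (_ : (u - 1) * (K * \sum_(i < n) u ^+ i) <= _).
  by rewrite ler_wpM2l // subr_ge0 ltW.
rewrite mulrCA geom; nra.
Qed.

Lemma root_monic_int {p : {poly rat}} {z : rat} :
  p \is monic -> p \is a polyOver Num.int -> root p z -> z \is a Num.int.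
Proof.
move=> monp /polyOverP pZ /rootP; rewrite horner_monic //; set n := (size p).-1.
set num := numq z; set den := denq z => pz0.
have numE : num%:~R = z * den%:~R :> rat by rewrite numqE.
have den_dvd : (den %| num ^+ n)%Z.
  apply/dvdzP; exists (- \sum_(i < n) numq p`_i * num ^+ i * den ^+ (n.-1 - i)).
  apply/eqP; rewrite mulNr -addr_eq0 -(intr_eq0 rat); apply/eqP.
  transitivity ((den%:~R : rat) ^+ n * (z ^+ n + \sum_(i < n) p`_i * z ^+ i)); last first.
    by rewrite pz0 mulr0.
  rewrite mulrDr rmorphD rmorphXn /= numE exprMn mulrC; congr (_ + _).
  rewrite rmorphM rmorph_sum mulr_suml mulr_sumr; apply: eq_bigr => -[i /= lt_in] _.
  rewrite !rmorphM !rmorphXn /= numqK // numE exprMn.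
  have -> : (den%:~R : rat) ^+ n = den%:~R ^+ (n.-1 - i) * den%:~R * den%:~R ^+ i.
    by rewrite -exprSr -exprD; congr (_ ^+ _); lia.
  ring.
have /coprimezXr cop : coprimez den num by rewrite coprimez_sym coprimezE coprime_num_den.
move: (cop n); rewrite coprimezE dvdzE in den_dvd *.
by rewrite /coprime (gcdn_idPl den_dvd) Qint_def -absz_denq.
Qed.

Section Rescale.
Context {R : comNzRingType}.

Definition rescale (p : {poly R}) (c : R) : {poly R} :=
  \poly_(i < size p) (p`_i * c ^+ ((size p).-1 - i)).

Lemma horner_rescale p c y : (rescale p c).[c * y] = c ^+ (size p).-1 * p.[y].
Proof.
rewrite horner_poly horner_coef mulr_sumr; apply: eq_bigr => -[i /= lt_ip] _.
have -> : c ^+ (size p).-1 = c ^+ ((size p).-1 - i) * c ^+ i.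
  by rewrite -exprD subnK // -ltnS prednK // (leq_ltn_trans _ lt_ip).
by rewrite exprMn; ring.
Qed.

Lemma rescale_monic (c : R) {p : {poly R}} : p \is monic -> rescale p c \is monic.
Proof.
move=> monp; have sp_gt0 : (0 < size p)%N by rewrite size_poly_gt0 monic_neq0.
have top : p`_(size p).-1 * c ^+ ((size p).-1 - (size p).-1) = 1.
  by rewrite subnn mulr1 -lead_coefE (monicP monp).
by rewrite monicE lead_coef_poly // top ?oner_neq0.
Qed.

Lemma rescale_polyOver (S : subringClosed R) p c : p \is monic -> c \in S ->
  (forall i, (i < (size p).-1)%N -> p`_i * c \in S) -> rescale p c \is a polyOver S.
Proof.
move=> monp cS pcS; apply/polyOverP => i; rewrite coef_poly.
case: ltnP => [lt_ip|]; last by rewrite rpred0.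
have [lt_in | ge_in] := ltnP i (size p).-1.
  by rewrite -(subnSK lt_in) exprS mulrA rpredM ?rpredX ?pcS.
have -> : i = (size p).-1.
  by apply/anti_leq; rewrite ge_in -ltnS prednK // (leq_ltn_trans _ lt_ip).
by rewrite subnn -lead_coefE (monicP monp) mulr1 rpred1.
Qed.

End Rescale.

Definition homog {R : nzRingType} (d : nat) (q : {poly R}) (a b : R) : R :=
  \sum_(j < d.+1) q`_j * a ^+ j * b ^+ (d - j).

Lemma horner_homog (F : fieldType) d (q : {poly F}) a b :
  b != 0 -> (size q <= d.+1)%N -> q.[a / b] * b ^+ d = homog d q a b.
Proof.
move=> b0 sq; rewrite (horner_coef_wide _ sq) mulr_suml; apply: eq_bigr => -[j /= le_jd] _.
have -> : b ^+ d = b ^+ j * b ^+ (d - j) by rewrite -exprD subnKC.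
by rewrite expr_div_n; field; rewrite expf_neq0.
Qed.

Lemma rmorph_homog (R S : nzRingType) (f : {rmorphism R -> S}) d q a b :
  f (homog d q a b) = homog d (map_poly f q) (f a) (f b).
Proof. by rewrite rmorph_sum; apply: eq_bigr => j _; rewrite coef_map !rmorphM !rmorphXn. Qed.

Lemma norm_homog_le (R : realDomainType) d (q : {poly R}) a b N :
  (forall j, `|q`_j| <= N) -> `|homog d q a b| <= d.+1%:R * N * Num.max `|a| `|b| ^+ d.
Proof.
move=> qN; set H := Num.max `|a| `|b|.
have aH : `|a| <= H by rewrite le_max lexx.
have bH : `|b| <= H by rewrite le_max lexx orbT.
have H0 : 0 <= H := le_trans (normr_ge0 b) bH.
apply: le_trans (ler_norm_sum _ _ _) _.
have -> : d.+1%:R = \sum_(j < d.+1) (1 : R) by rewrite sumr_const card_ord.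
rewrite !mulr_suml; apply: ler_sum => -[j /= le_jd] _.
have -> : H ^+ d = H ^+ j * H ^+ (d - j) by rewrite -exprD subnKC.
rewrite mul1r !normrM !normrX mulrA.
by rewrite !ler_pM ?mulr_ge0 ?exprn_ge0 ?lerXn2r ?nnegrE ?qN.
Qed.

Lemma horner_intr_homog (q : {poly int}) d a b : b != 0 -> (size q <= d.+1)%N ->
  (map_poly intr q).[a%:~R / b%:~R] * (b ^+ d)%:~R = (homog d q a b)%:~R :> rat.
Proof.
move=> b0 sq; rewrite rmorphXn /= horner_homog ?intr_eq0 ?rmorph_homog //.
exact: leq_trans (size_poly _ _) sq.
Qed.

Lemma size_coef_le_degT (f : {poly {poly int}}) i : (size (f`_i)%R <= (degT f).+1)%N.
Proof.
have [lt_if | ge_if] := ltnP i (size f); last by rewrite nth_default ?size_poly0.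
apply: leq_trans (leqSpred _) _; rewrite ltnS.
exact: (@leq_bigmax _ (fun j : 'I_(size f) => (size (f`_j)%R).-1) (Ordinal lt_if)).
Qed.

Lemma normf_ge2 (f : {poly {poly int}}) : 2 <= normf f.
Proof. exact: bigmax_ge_id. Qed.

Lemma norm_coef_le_normf (f : {poly {poly int}}) i j : `|f`_i`_j| <= normf f.
Proof.
have [lt_if | ge_if] := ltnP i (size f); last first.
  by rewrite (nth_default _ ge_if) coef0 normr0 (le_trans _ (normf_ge2 f)).
have [lt_jfi | ge_jfi] := ltnP j (size (f`_i)); last first.
  by rewrite (nth_default _ ge_jfi) normr0 (le_trans _ (normf_ge2 f)).
pose row (k : 'I_(size f)) := \big[Num.max/2]_(l < size (f`_k)) `|f`_k`_l|.
apply: le_trans (le_bigmax _ row (Ordinal lt_if)).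
exact: (le_bigmax _ (fun l : 'I_(size (f`_i)) => `|f`_i`_l|) (Ordinal lt_jfi)).
Qed.

Lemma norm_expr_le_height (a b N : int) d : 1 <= N ->
  `|b ^+ d| <= d.+1%:R * N * height a b ^+ d.
Proof.
move=> N1; have bH : `|b| <= height a b by rewrite le_max lexx orbT.
have H0 : 0 <= height a b := le_trans (normr_ge0 b) bH.
rewrite normrX (le_trans (lerXn2r _ _ _ bH)) ?nnegrE //.
by rewrite ler_peMl ?exprn_ge0 // mulr_ege1 ?ler1n.
Qed.

Theorem lemma2p4 (f : {poly {poly int}}) (dT dY : nat) :
  f \is monic -> degT f = dT -> degY f = dY ->
  forall (a b : int), b != 0 -> coprimez a b ->
  forall (t y : rat), t = a%:~R / b%:~R -> eval2 f t y = 0 ->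
  exists c : int, y = c%:~R / (b%:~R) ^+ dT /\
    `|c| <= 2 * (dT.+1)%:R * normf f * height a b ^+ dT.
Proof.
move=> monf degTf _ a b b0 _ t y tE fy0.
pose F := map_poly (horner_eval t \o map_poly intr) f.
have monF : F \is monic by exact: monic_map.
have {fy0} Fy0 : root F y by exact/rootP.
set B : int := b ^+ dT; set M : int := dT.+1%:R * normf f * height a b ^+ dT.
have B0 : (B%:~R : rat) != 0 by rewrite intr_eq0 expf_neq0.
have coefF i : F`_i * B%:~R = (homog dT f`_i a b)%:~R.
  by rewrite coef_map /= tE horner_intr_homog // -degTf size_coef_le_degT.
have homogM i : `|homog dT f`_i a b| <= M.
  by apply: norm_homog_le => j; apply: norm_coef_le_normf.
have BM : `|B| <= M.
  by apply: norm_expr_le_height; rewrite (le_trans _ (normf_ge2 f)).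
pose z := B%:~R * y.
have z_int : z \is a Num.int.
  apply: (root_monic_int (rescale_monic B%:~R monF)).
    by apply: rescale_polyOver => // [|i _]; rewrite ?coefF rpred_int.
  by rewrite /root /z horner_rescale (rootP Fy0) mulr0.
have zM : `|z| <= `|B%:~R| + M%:~R.
  have yM : `|y| <= 1 + M%:~R / `|B%:~R|.
    apply: (root_monic_norm_le monF Fy0) => i _.
    by rewrite ler_pdivlMr ?normr_gt0 // -normrM coefF -intr_norm ler_int.
  rewrite normrM; apply: le_trans (ler_wpM2l (normr_ge0 _) yM) _.
  by rewrite mulrDr mulr1 mulrCA divff ?mulr1 ?normr_eq0.
exists (numq z); split; first by rewrite numqK // /z -rmorphXn mulrC mulKf.
rewrite -(ler_int rat) intr_norm numqK // -!mulrA mulr_natl mulr2n !mulrA -/M rmorphD /=.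
have BM' : `|B%:~R| <= M%:~R :> rat by rewrite -intr_norm ler_int.
lra.
Qed.
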